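(* Let $G$ be a Polish group with a comeagre conjugacy class $C$. Then every element $g\in C$ is conjugate in $G$ to $g^{-1}$. *)

From HB Require Import structures.
From mathcomp Require Import all_boot all_order all_algebra.
From mathcomp Require Import all_classical all_reals all_analysis.
Set Implicit Arguments. Unset Strict Implicit. Unset Printing Implicit Defensive.
Import Order.TTheory GRing.Theory Num.Theory.
Local Open Scope classical_set_scope.
Local Open Scope ring_scope.

Definition topological_group (T : topologicalType)
  (mul : T -> T -> T) (inv : T -> T) (e : T) : Prop :=
  [/\ (forall x y z, mul x (mul y z) = mul (mul x y) z),
      (forall x, mul e x = x /\ mul x e = x),
      (forall x, mul (inv x) x = e /\ mul x (inv x) = e),
      continuous (fun p : T * T => mul p.1 p.2) &
      continuous inv].

Definition is_metric (R : realType) (T : Type) (d : T -> T -> R) : Prop :=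
  [/\ (forall x y, 0 <= d x y),
      (forall x y, d x y = 0 <-> x = y),
      (forall x y, d x y = d y x) &
      (forall x y z, d x z <= d x y + d y z)].

Definition metric_induces (R : realType) (T : topologicalType) (d : T -> T -> R)
  : Prop :=
  forall A : set T, open A <->
    (forall x, A x -> exists2 eps : R, 0 < eps & [set y | d x y < eps] `<=` A).

Definition metric_complete (R : realType) (T : topologicalType) (d : T -> T -> R)
  : Prop :=
  forall u : nat -> T,
    (forall eps : R, 0 < eps -> exists N, forall m n, (N <= m)%N -> (N <= n)%N ->
        d (u m) (u n) < eps) ->
    exists x : T, u @ \oo --> x.

Definition polish (R : realType) (T : topologicalType) : Prop :=
  (exists D : set T, countable D /\ dense D) /\
  (exists d : T -> T -> R, [/\ is_metric d, metric_induces d & metric_complete d]).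

Definition comeagre (T : topologicalType) (A : set T) : Prop :=
  exists U : nat -> set T, (forall n, open (U n) /\ dense (U n)) /\
    \bigcap_n U n `<=` A.

Definition conj_class (T : Type) (mul : T -> T -> T) (inv : T -> T) (g : T)
  : set T := [set mul (mul h g) (inv h) | h in [set: T]].

(* Inversion is a homeomorphism, so the inverse image of the comeagre class C
   of g0 is again comeagre, and by the Baire category theorem for a complete
   metric C meets it: some x with x and x^-1 both conjugate to g0. Then g0^-1 is
   conjugate to g0, and conjugating by the elements carrying g0 to g transfers
   this to every g in C. *)

From mathcomp Require Import all_boot all_order all_algebra.
From mathcomp Require Import all_classical all_reals all_analysis.
From mathcomp Require Import lra.

Set Implicit Arguments.
Unset Strict Implicit.
Unset Printing Implicit Defensive.
Import Order.TTheory GRing.Theory Num.Theory.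
Local Open Scope classical_set_scope.

Section GroupConjugation.
Variables (T : Type) (mul : T -> T -> T) (inv : T -> T) (e : T).
Hypothesis mulA : forall x y z, mul x (mul y z) = mul (mul x y) z.
Hypothesis mul1 : forall x, mul e x = x /\ mul x e = x.
Hypothesis mulV : forall x, mul (inv x) x = e /\ mul x (inv x) = e.

Local Notation conjb c y := (mul (mul c y) (inv c)).

Lemma inv_unique x y : mul x y = e -> inv x = y.
Proof.
move=> xy; rewrite -(proj2 (mul1 (inv x))) -xy mulA (proj1 (mulV x)).
exact: (proj1 (mul1 y)).
Qed.

Lemma invK x : inv (inv x) = x.
Proof. exact/inv_unique/(proj1 (mulV x)). Qed.

Lemma invM x y : inv (mul x y) = mul (inv y) (inv x).
Proof.
apply: inv_unique; rewrite mulA -(mulA x y) (proj2 (mulV y)) (proj2 (mul1 x)).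
exact: (proj2 (mulV x)).
Qed.

Lemma inv_conjb c y : inv (conjb c y) = conjb c (inv y).
Proof. by rewrite !invM invK mulA. Qed.

Lemma conjbM c c' y : conjb c (conjb c' y) = conjb (mul c c') y.
Proof. by rewrite invM !mulA. Qed.

Lemma conjbK c y : conjb (inv c) (conjb c y) = y.
Proof.
rewrite conjbM invM invK (proj1 (mulV c)) (proj2 (mul1 _)).
exact: (proj1 (mul1 y)).
Qed.

(* With x = h g0 h^-1 and x^-1 = k g0 k^-1, the element h^-1 k conjugates g0
   to g0^-1. *)
Lemma conj_class_inv g0 x g :
  conj_class mul inv g0 x -> conj_class mul inv g0 (inv x) ->
  conj_class mul inv g0 g -> conj_class mul inv g (inv g).
Proof.
move=> [h _ <-] [k _ hk] [a _ <-].
have g0V : inv g0 = conjb (mul (inv h) k) g0.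
  by rewrite -conjbM hk inv_conjb conjbK.
exists (mul (mul a (mul (inv h) k)) (inv a)) => //.
by rewrite [RHS]inv_conjb g0V -conjbM conjbK conjbM.
Qed.

End GroupConjugation.

Section ComeagreInvolution.
Variables (T : topologicalType) (f : T -> T).
Hypothesis f_cont : continuous f.
Hypothesis fK : involutive f.

Lemma open_preimage_involution (A : set T) : open A -> open (f @^-1` A).
Proof. by apply: open_comp => x _; exact: f_cont. Qed.

Lemma dense_preimage_involution (A : set T) : dense A -> dense (f @^-1` A).
Proof.
move=> dA O [y Oy] oO.
have fO0 : f @^-1` O !=set0 by exists (f y); rewrite /= fK.
have [z [Oz Az]] := dA _ fO0 (open_preimage_involution oO).
by exists (f z); rewrite /= fK.
Qed.

Lemma comeagre_preimage_involution (A : set T) :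
  comeagre A -> comeagre (f @^-1` A).
Proof.
move=> [U [oUdU UA]]; exists (fun n => f @^-1` U n); split.
  move=> n; have [oU dU] := oUdU n.
  by split; [exact: open_preimage_involution | exact: dense_preimage_involution].
by move=> x Ux; apply: UA => n _; exact: Ux.
Qed.

End ComeagreInvolution.

Lemma comeagreI (T : topologicalType) (A B : set T) :
  comeagre A -> comeagre B -> comeagre (A `&` B).
Proof.
move=> [U [oUdU UA]] [V [oVdV VB]]; exists (fun n => U n `&` V n); split.
  move=> n; have [oU dU] := oUdU n; have [oV dV] := oVdV n.
  by split; [exact: openI | exact: denseI].
by move=> x UVx; split; [apply: UA | apply: VB] => n _; have [] := UVx n I.
Qed.

Section MetricBaire.
Local Open Scope ring_scope.
Variables (R : realType) (T : topologicalType) (d : T -> T -> R).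
Hypothesis d_metric : is_metric d.
Hypothesis d_induces : metric_induces d.

Local Notation dball x r := [set y | d x y < r].

Let d_sym x y : d x y = d y x. Proof. by case: d_metric. Qed.
Let d_triangle x y z : d x z <= d x y + d y z. Proof. by case: d_metric. Qed.
Let d_refl x : d x x = 0. Proof. by case: d_metric => _ dE _ _; exact/dE. Qed.

Lemma open_dball x r : open (dball x r).
Proof.
apply/d_induces => y /= xy; exists (r - d x y); first by rewrite subr_gt0.
by move=> z /= yz; have := d_triangle x y z; lra.
Qed.

Lemma cvg_dball (u : nat -> T) x : u @ \oo --> x ->
  forall eps, 0 < eps -> exists N, forall n, (N <= n)%N -> d x (u n) < eps.
Proof.
move=> ux eps eps_gt0.
have : nbhs x (dball x eps).
  by apply: open_nbhs_nbhs; split; [exact: open_dball | rewrite /= d_refl].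
by move=> /ux [N _ HN]; exists N => n Nn; exact: HN.
Qed.

(* The factor 2 leaves room for the limit of the centres, which is only known
   to lie in the closure of the smaller ball. *)
Lemma dense_open_dball_shrink (n : nat) x r (V : set T) :
  open V -> dense V -> 0 < r ->
  exists y s, [/\ 0 < s, s <= n.+1%:R^-1 &
                  dball y (2 * s) `<=` dball x r `&` V].
Proof.
move=> oV dV r_gt0.
have x_ball : dball x r !=set0 by exists x; rewrite /= d_refl.
have [y [xy Vy]] := dV _ x_ball (open_dball x r).
have [eps eps_gt0 epsV] := proj1 (d_induces _) (openI (open_dball x r) oV) y
  (conj xy Vy).
exists y, (Num.min (Num.min (eps / 2) r) n.+1%:R^-1); split.
- by rewrite !lt_min r_gt0 invr_gt0 ltr0n andbT divr_gt0.
- by rewrite ge_min lexx orbT.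
- move=> z /= yz; apply: epsV => /=.
  have : Num.min (Num.min (eps / 2) r) n.+1%:R^-1 <= eps / 2
    by rewrite !ge_min lexx.
  lra.
Qed.

Section NestedBalls.
Variables (c : nat -> T) (r : nat -> R) (V : nat -> set T).
Hypothesis r_gt0 : forall n, 0 < r n.
Hypothesis r_small : forall n, r n.+1 <= n.+1%:R^-1.
Hypothesis dball_nested :
  forall n, dball (c n.+1) (2 * r n.+1) `<=` dball (c n) (r n) `&` V n.

Lemma dball_succ_sub n : dball (c n.+1) (r n.+1) `<=` dball (c n) (r n).
Proof.
move=> y /= ny; suff [] : (dball (c n) (r n) `&` V n) y by [].
by apply: dball_nested; have := r_gt0 n.+1; rewrite /=; lra.
Qed.

Lemma dball_nested_le n m :
  (n <= m)%N -> dball (c m) (r m) `<=` dball (c n) (r n).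
Proof.
move=> /subnKC <-; elim: (m - n)%N => [|k IH]; first by rewrite addn0.
by rewrite addnS => y /dball_succ_sub /IH.
Qed.

Lemma nested_dball_center n m : (n <= m)%N -> d (c n) (c m) < r n.
Proof. by move=> /dball_nested_le; apply; rewrite /= d_refl. Qed.

Lemma nested_dball_cauchy (eps : R) : 0 < eps ->
  exists N, forall m n, (N <= m)%N -> (N <= n)%N -> d (c m) (c n) < eps.
Proof.
move=> eps_gt0; have [k] := @ltr_add_invr R 0 (eps / 2) ltac:(by rewrite divr_gt0).
rewrite add0r => k_small; exists k.+1 => m n km kn.
have := nested_dball_center km; have := nested_dball_center kn.
have := d_triangle (c m) (c k.+1) (c n); have := r_small k.
rewrite (d_sym (c m) (c k.+1)); move: k_small; set t := _^-1; lra.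
Qed.

Lemma nested_dball_limit x : (c @ \oo --> x) -> forall n, V n x.
Proof.
move=> cx n; have [N Nx] := cvg_dball cx (r_gt0 n.+1).
have center_close := nested_dball_center (leq_maxr N n.+1).
have := Nx _ (leq_maxl N n.+1); rewrite d_sym => limit_close.
have := d_triangle (c n.+1) (c (maxn N n.+1)) x => triangle.
by have [] := @dball_nested n x ltac:(rewrite /=; lra).
Qed.

End NestedBalls.

Hypothesis d_complete : metric_complete d.

Theorem complete_metric_Baire (x0 : T) (V : nat -> set T) :
  (forall n, open (V n) /\ dense (V n)) -> exists x, forall n, V n x.
Proof.
move=> oVdV.
have step (p : nat * (T * R)) : exists q : T * R, 0 < p.2.2 ->
    [/\ 0 < q.2, q.2 <= p.1.+1%:R^-1 &
        dball q.1 (2 * q.2) `<=` dball p.2.1 p.2.2 `&` V p.1].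
  case: p => n [x r] /=; have [r_gt0|r_le0] := ltP 0 r.
    have [oV dV] := oVdV n.
    by have [y [s]] := dense_open_dball_shrink n x oV dV r_gt0; exists (y, s).
  by exists (x, r); rewrite ltNge r_le0.
have [f fP] := choice step.
pose s := fix s n := if n is m.+1 then f (m, s m) else (x0, 1).
have s_gt0 n : 0 < (s n).2.
  by elim: n => [|n IH]; [exact: ltr01 | have [] := fP (n, s n) IH].
have s_small n : (s n.+1).2 <= n.+1%:R^-1 by have [] := fP (n, s n) (s_gt0 n).
have s_nested n :
    dball (s n.+1).1 (2 * (s n.+1).2) `<=` dball (s n).1 (s n).2 `&` V n.
  by have [] := fP (n, s n) (s_gt0 n).
have [x sx] := d_complete (nested_dball_cauchy s_gt0 s_small s_nested).
by exists x; exact: nested_dball_limit s_gt0 s_nested x sx.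
Qed.

End MetricBaire.

Lemma polish_comeagre_neq0 (R : realType) (T : topologicalType) (x0 : T)
    (A : set T) :
  polish R T -> comeagre A -> A !=set0.
Proof.
move=> [_ [d [d_metric d_induces d_complete]]] [U [oUdU UA]].
have [x Ux] := complete_metric_Baire d_metric d_induces d_complete x0 oUdU.
by exists x; apply: UA => n _; exact: Ux.
Qed.

Theorem mainTheorem7 (R : realType) (T : topologicalType)
  (mul : T -> T -> T) (inv : T -> T) (e : T) :
  topological_group mul inv e -> polish R T ->
  forall g0 : T, comeagre (conj_class mul inv g0) ->
  forall g : T, conj_class mul inv g0 g ->
  exists h : T, mul (mul h g) (inv h) = inv g.
Proof.
move=> [mulA mul1 mulV _ inv_cont] T_polish g0 C_comeagre g Cg.
have invC_comeagre := comeagre_preimage_involution inv_cont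
  (invK mulA mul1 mulV) C_comeagre.
have [x [Cx Cix]] := polish_comeagre_neq0 e T_polish
  (comeagreI C_comeagre invC_comeagre).
have [h _ hg] := conj_class_inv mulA mul1 mulV Cx Cix Cg.
by exists h.
Qed.
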